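(* Assume the setting in the context, and let $\mathbf d^*$ be any $\Phi_{\mathfrak B}$-optimal design with $\boldsymbol\Sigma^*=\mathbf M(\mathbf d^* )^{-1}=(c^*_{jk})$. Then for all $j,k\in\{1,\dots,m\}$ with $j\ne k$, writing $\mathbf E_{jk}=(\mathbf e_j,\mathbf e_k)$: $$|c^*_{jk}|\le\frac{\alpha}{2}K\,\lambda_{\max}\big(\mathbf E_{jk}'(\mathbf B\mathbf B')^{-1}\mathbf E_{jk}\big),$$ $$|c^*_{jk}|\le\frac{\alpha}{2}\lambda_{\max}\big(\mathbf E_{jk}'\mathbf N^+(\mathbf w^{(jk+)})\mathbf E_{jk}\big),$$ $$|c^*_{jk}|\le\frac{\alpha}{2}\lambda_{\max}\big(\mathbf E_{jk}'\mathbf N^+(\mathbf w^{(jk* )})\mathbf E_{jk}\big).$$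
   Context: Let $n,m,N,K$ be positive integers with $2\le m\le N\le n$, and let $\mathbf f_1,\dots,\mathbf f_n\in\mathbb R^m$ span $\mathbb R^m$. A (binary) design is $\mathbf d\in\{0,1\}^n$ with $\sum_i d_i=N$; its information matrix is $\mathbf M(\mathbf d)=\sum_{i=1}^n d_i\mathbf f_i\mathbf f_i'$. For $\ell\in\{1,\dots,K\}$ let $\mathbf B_\ell$ be a real $m\times s_\ell$ matrix, $\mathbf B=(\mathbf B_1,\dots,\mathbf B_K)$, with column space of $\mathbf B$ equal to $\mathbb R^m$ and no zero column. For positive definite $\mathbf M$, $\Phi_{\mathfrak B}(\mathbf M)=\max_{\ell}\mathrm{tr}(\mathbf B_\ell'\mathbf M^{-1}\mathbf B_\ell)$. A $\Phi_{\mathfrak B}$-optimal design minimizes $\Phi_{\mathfrak B}(\mathbf M(\mathbf d))$ over designs $\mathbf d$ with nonsingular $\mathbf M(\mathbf d)$. Let $\mathbf d_0$ be a design with nonsingular $\mathbf M(\mathbf d_0)$ and $\alpha=\Phi_{\mathfrak B}(\mathbf M(\mathbf d_0))$. For $\mathbf w\in\mathbb R^K$, $\mathbf w\ge 0$, $\sum w_\ell=1$, let $\mathbf N(\mathbf w)=\sum_\ell w_\ell\mathbf B_\ell\mathbf B_\ell'$; $\mathbf A^+$ is the Moore–Penrose pseudoinverse, $\lambda_{\max}$ the largest eigenvalue, $\mathbf e_j$ the $j$-th unit vector. For $j\in\{1,\dots,m\}$: write $\mathbf B^+\mathbf e_j=((\mathbf h^{(j+)}_1)',\dots,(\mathbf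 h^{(j+)}_K)')'$ with $\mathbf h^{(j+)}_\ell\in\mathbb R^{s_\ell}$, and set $w^{(j+)}_\ell=\|\mathbf h^{(j+)}_\ell\|/\sum_{t}\|\mathbf h^{(j+)}_t\|$; $\mathbf w^{(j* )}$ is a minimizer of $\mathbf e_j'\mathbf N^+(\mathbf w)\mathbf e_j$ over all such $\mathbf w$ with $\mathbf e_j\in\mathcal C(\mathbf N(\mathbf w))$. Then $\mathbf w^{(jk+)}=\tfrac12(\mathbf w^{(j+)}+\mathbf w^{(k+)})$ and $\mathbf w^{(jk* )}=\tfrac12(\mathbf w^{(j* )}+\mathbf w^{(k* )})$. *)

From HB Require Import structures.
From mathcomp Require Import all_boot all_order all_algebra.
From mathcomp Require Import boolp classical_sets reals.
Set Implicit Arguments. Unset Strict Implicit. Unset Printing Implicit Defensive.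
Import Order.TTheory GRing.Theory Num.Theory.
Local Open Scope ring_scope.

Section Defs.
Variable R : realType.

Definition is_mp_pinv (p q : nat) (A : 'M[R]_(p, q)) (X : 'M[R]_(q, p)) : Prop :=
  [/\ A *m X *m A = A, X *m A *m X = X,
      (A *m X)^T = A *m X & (X *m A)^T = X *m A].

(* Moore--Penrose pseudoinverse A^+ (it exists and is unique). *)
Definition mp_pinv (p q : nat) (A : 'M[R]_(p, q)) : 'M[R]_(q, p) :=
  xget 0 [set X | is_mp_pinv A X].

Definition lambda_max (p : nat) (A : 'M[R]_p) : R :=
  sup [set a : R | eigenvalue A a].

Definition unitv (m : nat) (j : 'I_m) : 'cV[R]_m := delta_mx j 0.

Definition Ejk (m : nat) (j k : 'I_m) : 'M[R]_(m, 2) := row_mx (unitv j) (unitv k).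

Definition enorm (p : nat) (v : 'cV[R]_p) : R := Num.sqrt (\sum_i v i 0 ^+ 2).

Definition infomx (n m : nat) (f : 'I_n -> 'cV[R]_m) (d : 'I_n -> bool) : 'M[R]_m :=
  \sum_(i < n) (d i)%:R *: (f i *m (f i)^T).

Definition is_design (n N : nat) (d : 'I_n -> bool) : Prop :=
  (\sum_(i < n) (d i : nat))%N = N.

(* Phi_B(M) = max_l tr(B_l' M^{-1} B_l)  (for positive definite M; the traces
   are then nonnegative so 0 is a neutral default for the max) *)
Definition PhiB (m K : nat) (s : 'I_K -> nat) (B : forall l : 'I_K, 'M[R]_(m, s l))
    (M : 'M[R]_m) : R :=
  \big[Num.max/0]_(l < K) \tr ((B l)^T *m invmx M *m B l).

Definition is_PhiB_optimal (n m N K : nat) (f : 'I_n -> 'cV[R]_m) (s : 'I_K -> nat)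
    (B : forall l : 'I_K, 'M[R]_(m, s l)) (dstar : 'I_n -> bool) : Prop :=
  [/\ is_design N dstar, infomx f dstar \in unitmx &
      forall d, is_design N d -> infomx f d \in unitmx ->
        PhiB B (infomx f dstar) <= PhiB B (infomx f d)].

Definition Bcat (m K : nat) (s : 'I_K -> nat) (B : forall l : 'I_K, 'M[R]_(m, s l))
  : 'M[R]_(m, \sum_(l < K) s l) := mxrow B.

Definition is_weight (K : nat) (w : 'I_K -> R) : Prop :=
  (forall l, 0 <= w l) /\ \sum_(l < K) w l = 1.

Definition Nmx (m K : nat) (s : 'I_K -> nat) (B : forall l : 'I_K, 'M[R]_(m, s l))
    (w : 'I_K -> R) : 'M[R]_m :=
  \sum_(l < K) w l *: (B l *m (B l)^T).

Definition hplus (m K : nat) (s : 'I_K -> nat) (B : forall l : 'I_K, 'M[R]_(m, s l))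
    (j : 'I_m) (l : 'I_K) : 'cV[R]_(s l) :=
  submxcol (mp_pinv (Bcat B) *m unitv j) l.

Definition wplus (m K : nat) (s : 'I_K -> nat) (B : forall l : 'I_K, 'M[R]_(m, s l))
    (j : 'I_m) : 'I_K -> R :=
  fun l => enorm (hplus B j l) / \sum_(t < K) enorm (hplus B j t).

Definition in_colspace (m p : nat) (v : 'cV[R]_m) (A : 'M[R]_(m, p)) : bool :=
  (v^T <= A^T)%MS.

Definition is_wstar (m K : nat) (s : 'I_K -> nat) (B : forall l : 'I_K, 'M[R]_(m, s l))
    (j : 'I_m) (w : 'I_K -> R) : Prop :=
  [/\ is_weight w, in_colspace (unitv j) (Nmx B w) &
      forall v, is_weight v -> in_colspace (unitv j) (Nmx B v) ->
        ((unitv j)^T *m mp_pinv (Nmx B w) *m unitv j) 0 0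
          <= ((unitv j)^T *m mp_pinv (Nmx B v) *m unitv j) 0 0].

Definition wavg (K : nat) (w1 w2 : 'I_K -> R) : 'I_K -> R :=
  fun l => (w1 l + w2 l) / 2.

End Defs.
Arguments unitv {R m}.
Arguments Ejk {R m}.

From HB Require Import structures.
From mathcomp Require Import all_boot all_order all_algebra.
From mathcomp Require Import boolp classical_sets reals.
From mathcomp Require Import ring lra.
Import Order.TTheory GRing.Theory Num.Theory.
Local Open Scope ring_scope.

(* Let alpha = Phi_B(M(d0)).  Optimality gives, for every weight vector w,
   sum_l w_l tr(B_l' Sigma B_l) <= Phi_B(M(d_star)) <= alpha.  A Cauchy--Schwarz
   argument for the trace form sum_l w_l tr(X_l' Sigma Y_l) turns this into
   x' Sigma x <= alpha y' N(w) y whenever x = N(w) y; if c Q is a symmetric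
   generalized inverse of N(w), the right-hand side is alpha c x' Q x.  Taking
   x = e_j +- e_k (both in the column space of N(w)) and bounding the 2x2
   quadratic form E_jk' Q E_jk by its largest eigenvalue yields
   |Sigma_jk| <= alpha c / 2 lambda_max(E_jk' Q E_jk)  (lemma offdiag_bound).

   The three bounds of the
   theorem are offdiag_bound for the uniform weights (Q = (BB')^-1, c = K) and
   for the averaged weights w^(jk+) and w^(jk star) (Q = N^+, c = 1). *)

Section MoorePenrose.
Set Implicit Arguments.
Context {R : realType}.

Lemma gram_diag_ge0 p q (A : 'M[R]_(p, q)) c : 0 <= (A^T *m A) c c.
Proof. by rewrite mxE; apply: sumr_ge0 => i _; rewrite mxE -expr2 sqr_ge0. Qed.

Lemma gram_trace_ge0 p q (A : 'M[R]_(p, q)) : 0 <= \tr (A^T *m A).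
Proof. by apply: sumr_ge0 => c _; exact: gram_diag_ge0. Qed.

Lemma gram_trace_eq0 p q (A : 'M[R]_(p, q)) : \tr (A^T *m A) = 0 -> A = 0.
Proof.
move=> /(psumr_eq0P (fun c _ => gram_diag_ge0 A c)) diag0.
apply/matrixP => i c; have := diag0 c isT; rewrite mxE.
have sq_ge0 (i' : 'I_p) : true -> 0 <= A^T c i' * A i' c by rewrite mxE -expr2 sqr_ge0.
move=> /(psumr_eq0P sq_ge0) /(_ i isT) /eqP.
by rewrite !mxE -expr2 sqrf_eq0 => /eqP.
Qed.

Lemma row_free_gram_unit p q (M : 'M[R]_(p, q)) : row_free M -> M *m M^T \in unitmx.
Proof.
move=> freeM; rewrite -row_free_unit; apply: inj_row_free => v vMM0.
have : \tr ((v *m M)^T^T *m (v *m M)^T) = 0.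
  by rewrite trmxK trmx_mul mulmxA -(mulmxA v) vMM0 mul0mx mxtrace0.
move=> /gram_trace_eq0 /(congr1 trmx); rewrite trmxK trmx0 => /eqP.
by rewrite mulmx_free_eq0 // => /eqP.
Qed.

Lemma mp_pinv_factor p q r (C : 'M[R]_(p, r)) (F : 'M[R]_(r, q)) :
  C^T *m C \in unitmx -> F *m F^T \in unitmx ->
  is_mp_pinv (C *m F) (F^T *m invmx (F *m F^T) *m invmx (C^T *m C) *m C^T).
Proof.
move=> unitC unitF.
have AX : C *m F *m (F^T *m invmx (F *m F^T) *m invmx (C^T *m C) *m C^T)
   = C *m invmx (C^T *m C) *m C^T.
  by rewrite !mulmxA -(mulmxA C F) -(mulmxA C) mulmxV // mulmx1.
have XA : (F^T *m invmx (F *m F^T) *m invmx (C^T *m C) *m C^T) *m (C *m F)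
   = F^T *m invmx (F *m F^T) *m F.
  by rewrite !mulmxA -(mulmxA _ C^T C) mulmxKV.
split.
- by rewrite AX -!mulmxA (mulmxA C^T C F) mulKmx.
- by rewrite XA -!mulmxA (mulmxA F F^T) mulKmx.
- by rewrite AX !trmx_mul trmxK trmx_inv trmx_mul trmxK mulmxA.
- by rewrite XA !trmx_mul trmxK trmx_inv trmx_mul trmxK mulmxA.
Qed.

(* Existence, through the rank factorization A = col_base A *m row_base A. *)
Lemma mp_pinv_exists p q (A : 'M[R]_(p, q)) : exists X, is_mp_pinv A X.
Proof.
have unitC : (col_base A)^T *m (col_base A)^T^T \in unitmx.
  apply: row_free_gram_unit; rewrite /row_free mxrank_tr.
  exact: col_base_full.
have unitF : row_base A *m (row_base A)^T \in unitmx.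
  exact/row_free_gram_unit/row_base_free.
rewrite trmxK in unitC.
by eexists; rewrite -[X in is_mp_pinv X](mulmx_base A); exact: mp_pinv_factor.
Qed.

Lemma mp_pinv_unique p q (A : 'M[R]_(p, q)) X Y :
  is_mp_pinv A X -> is_mp_pinv A Y -> X = Y.
Proof.
case=> [AXA XAX AXsym XAsym] [AYA YAY AYsym YAsym].
have XAY : X = X *m A *m Y.
  have X_eq : X = X *m X^T *m A^T by rewrite -mulmxA -trmx_mul AXsym mulmxA XAX.
  have At_eq : A^T = A^T *m A *m Y by rewrite -mulmxA -{1}AYsym -trmx_mul AYA.
  transitivity (X *m X^T *m (A^T *m A *m Y)); first by rewrite -At_eq -X_eq.
  by rewrite !mulmxA -(mulmxA X X^T A^T) -trmx_mul AXsym mulmxA XAX.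
have YXA : Y = X *m A *m Y.
  have Y_eq : Y = A^T *m Y^T *m Y by rewrite -trmx_mul YAsym YAY.
  have At_eq : A^T = X *m A *m A^T by rewrite -XAsym -trmx_mul mulmxA AXA.
  transitivity (X *m A *m A^T *m Y^T *m Y); first by rewrite -At_eq -Y_eq.
  by rewrite -!mulmxA (mulmxA A^T Y^T Y) -trmx_mul YAsym YAY.
by rewrite XAY -YXA.
Qed.

Lemma mp_pinvP p q (A : 'M[R]_(p, q)) : is_mp_pinv A (mp_pinv A).
Proof.
rewrite /mp_pinv; apply: (@xgetPex _ 0 [set X | is_mp_pinv A X]).
exact: mp_pinv_exists.
Qed.

(* The pseudoinverse of a symmetric matrix is symmetric: X' satisfies the
   Penrose conditions whenever X does. *)
Lemma mp_pinv_sym p (A : 'M[R]_p) : A^T = A -> (mp_pinv A)^T = mp_pinv A.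
Proof.
move=> symA; apply: mp_pinv_unique (mp_pinvP A).
have [AXA XAX AXsym XAsym] := mp_pinvP A.
split.
- by apply: (can_inj trmxK); rewrite !trmx_mul !trmxK symA mulmxA AXA.
- by apply: (can_inj trmxK); rewrite !trmx_mul !trmxK symA mulmxA XAX.
- by rewrite trmx_mul trmxK symA -XAsym trmx_mul symA.
- by rewrite trmx_mul trmxK symA -AXsym trmx_mul symA.
Qed.

Lemma mp_pinv_rinv p q (A : 'M[R]_(p, q)) : \rank A = p -> A *m mp_pinv A = 1%:M.
Proof.
move=> rkA; have [AXA _ _ _] := mp_pinvP A.
have freeA : row_free A by rewrite /row_free rkA.
by apply: (row_free_inj freeA); rewrite /= AXA mul1mx.
Qed.
End MoorePenrose.

Lemma det_mx22 (T : comNzRingType) (A : 'M[T]_2) :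
  \det A = A 0 0 * A 1 1 - A 0 1 * A 1 0.
Proof.
have lift00 : lift ord0 ord0 = 1 :> 'I_2 by exact: val_inj.
have lift10 : lift 1 ord0 = 0 :> 'I_2 by exact: val_inj.
rewrite (expand_det_row _ 0) !big_ord_recl big_ord0 addr0 /cofactor !det_mx11 !mxE.
by rewrite lift00 lift10 /= expr1 mulN1r mul1r mulrN.
Qed.

Section Lambda2.
Set Implicit Arguments.
Context {R : realType}.

Lemma eigenvalue_mx22 (A : 'M[R]_2) a :
  eigenvalue A a = ((a - A 0 0) * (a - A 1 1) == A 0 1 * A 1 0).
Proof.
rewrite eigenvalue_root_char /root /char_poly det_mx22 /char_poly_mx !mxE /=.
by rewrite !hornerE subr_eq0 mulrNN.
Qed.

Lemma lambda_max_mx22 (A : 'M[R]_2) : A 0 1 = A 1 0 ->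
  lambda_max A = (A 0 0 + A 1 1) / 2
                 + Num.sqrt (((A 0 0 - A 1 1) / 2) ^+ 2 + A 0 1 ^+ 2).
Proof.
move=> symA; rewrite /lambda_max.
set p := A 0 0; set q := A 0 1; set r := A 1 1; set D := Num.sqrt _.
have D_ge0 : 0 <= D by exact: sqrtr_ge0.
have D2 : D ^+ 2 = ((p - r) / 2) ^+ 2 + q ^+ 2.
  by rewrite sqr_sqrtr // addr_ge0 // sqr_ge0.
have eig a : eigenvalue A a = ((a - (p + r) / 2) ^+ 2 == D ^+ 2).
  rewrite eigenvalue_mx22 -/p -/q -/r -symA -/q D2; apply/eqP/eqP => h; lra.
apply/eqP; rewrite eq_le; apply/andP; split.
  apply: ge_sup; first by exists ((p + r) / 2 + D); rewrite /= eig; apply/eqP; ring.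
  move=> a /=; rewrite eig => /eqP h; nra.
apply: ub_le_sup; last by rewrite /= eig; apply/eqP; ring.
by exists ((p + r) / 2 + D) => a /=; rewrite eig => /eqP h; nra.
Qed.

Lemma lambda_max_mx22_ge (A : 'M[R]_2) : A 0 1 = A 1 0 ->
  A 0 0 + A 1 1 + 2 * `|A 0 1| <= 2 * lambda_max A.
Proof.
move=> symA; rewrite lambda_max_mx22 //.
set D := Num.sqrt _.
suff : `|A 0 1| <= D by lra.
rewrite -ler_sqr ?nnegrE ?sqrtr_ge0 // real_normK ?num_real // sqr_sqrtr.
  by rewrite lerDr sqr_ge0.
by rewrite addr_ge0 // sqr_ge0.
Qed.
End Lambda2.

Section QuadraticForms.
Set Implicit Arguments.
Context {R : realType}.

Definition qform m (S : 'M[R]_m) (u : 'cV[R]_m) : R := (u^T *m S *m u) 0 0.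

Definition psd m (S : 'M[R]_m) : Prop := forall u, 0 <= qform S u.

Lemma entryD p q (A B : 'M[R]_(p, q)) i j : (A + B) i j = A i j + B i j.
Proof. by rewrite mxE. Qed.

Lemma entryZ p q (c : R) (A : 'M[R]_(p, q)) i j : (c *: A) i j = c * A i j.
Proof. by rewrite mxE. Qed.

Lemma qformZ m (S : 'M[R]_m) (c : R) u : qform (c *: S) u = c * qform S u.
Proof. by rewrite /qform -scalemxAr -scalemxAl entryZ. Qed.

Lemma qform_sandwich m (N M : 'M[R]_m) y :
  N^T = N -> qform (N *m M *m N) y = qform M (N *m y).
Proof. by move=> symN; rewrite /qform trmx_mul symN !mulmxA. Qed.

Lemma unitv_bilin m (S : 'M[R]_m) a b : ((unitv a)^T *m S *m unitv b) 0 0 = S a b.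
Proof. by rewrite /unitv trmx_delta -rowE -colE !mxE. Qed.

Lemma qform_unitv2 m (S : 'M[R]_m) a b g :
  qform S (unitv a + g *: unitv b) = S a a + g * (S a b + S b a) + g ^+ 2 * S b b.
Proof.
rewrite /qform !mulmxDr -!scalemxAr linearD linearZ /=.
rewrite !mulmxDl -!scalemxAl.
by rewrite !(entryD, entryZ) !unitv_bilin; ring.
Qed.

Lemma quad_mx_entry p q (A : 'M[R]_(p, q)) (S : 'M[R]_p) a b :
  (A^T *m S *m A) a b = ((col a A)^T *m S *m col b A) 0 0.
Proof. by rewrite tr_col -row_mul !mxE; apply: eq_bigr => i _; rewrite !mxE. Qed.

Lemma col0_Ejk m (j k : 'I_m) : col 0 (Ejk j k : 'M[R]_(m, 2)) = unitv j.
Proof.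
apply/matrixP => i z; rewrite [LHS]mxE (ord1 z).
have -> : (0 : 'I_2) = lshift 1 (0 : 'I_1) by exact: val_inj.
exact: row_mxEl.
Qed.

Lemma col1_Ejk m (j k : 'I_m) : col 1 (Ejk j k : 'M[R]_(m, 2)) = unitv k.
Proof.
apply/matrixP => i z; rewrite [LHS]mxE (ord1 z).
have -> : (1 : 'I_2) = rshift 1 (0 : 'I_1) by exact: val_inj.
exact: row_mxEr.
Qed.

Lemma Ejk_quad_entries m (j k : 'I_m) (Q : 'M[R]_m) :
  let A := (Ejk j k)^T *m Q *m Ejk j k in
  [/\ A 0 0 = Q j j, A 0 1 = Q j k, A 1 0 = Q k j & A 1 1 = Q k k].
Proof. by split; rewrite quad_mx_entry ?col0_Ejk ?col1_Ejk unitv_bilin. Qed.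

(* If S is positive semidefinite and dominated by beta Q along every line
   e_j + g e_k, then |S_jk| <= beta/2 lambda_max(E_jk' Q E_jk): compare the
   inequality at g = sign(S_jk) with positivity at g = -sign(S_jk). *)
Lemma offdiag_le_lambda_max m (S Q : 'M[R]_m) (beta : R) j k :
  S^T = S -> psd S -> Q^T = Q -> 0 <= beta ->
  (forall g, qform S (unitv j + g *: unitv k)
             <= beta * qform Q (unitv j + g *: unitv k)) ->
  `|S j k| <= beta / 2 * lambda_max ((Ejk j k)^T *m Q *m Ejk j k).
Proof.
move=> symS psdS symQ beta_ge0 dom.
have SkjE : S k j = S j k by rewrite -[in LHS]symS mxE.
have QkjE : Q k j = Q j k by rewrite -[in LHS]symQ mxE.
have [E00 E01 E10 E11] := Ejk_quad_entries j k Q.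
have := @lambda_max_mx22_ge R ((Ejk j k)^T *m Q *m Ejk j k).
rewrite E00 E01 E10 E11 QkjE => /(_ erefl).
set L := lambda_max _ => lamL.
pose sg : R := if 0 <= S j k then 1 else -1.
have sg2 : sg ^+ 2 = 1 by rewrite /sg; case: ifP; rewrite ?sqrrN expr1n.
have sgS : sg * S j k = `|S j k|.
  rewrite /sg; case: ifP => [S_ge0|]; first by rewrite mul1r ger0_norm.
  by move/negbT; rewrite -ltNge => S_lt0; rewrite mulN1r ltr0_norm.
have sgQ : sg * Q j k <= `|Q j k|.
  rewrite /sg; case: ifP => _; first by rewrite mul1r ler_norm.
  by rewrite mulN1r -normrN ler_norm.
have upper := dom sg; have lower := psdS (unitv j + (- sg) *: unitv k).
rewrite !qform_unitv2 SkjE QkjE sg2 in upper.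
rewrite qform_unitv2 SkjE sqrrN sg2 in lower.
have : beta * (Q j j + Q k k + 2 * (sg * Q j k)) <= beta * (2 * L).
  by apply: ler_wpM2l => //; lra.
lra.
Qed.
End QuadraticForms.

Section TraceInequality.
Set Implicit Arguments.
Context {R : realType}.

Lemma psd_trace_ge0 m p (S : 'M[R]_m) (X : 'M[R]_(m, p)) :
  psd S -> 0 <= \tr (X^T *m S *m X).
Proof. by move=> psdS; apply: sumr_ge0 => c _; rewrite quad_mx_entry; exact: psdS. Qed.

Lemma bilin_sum m (I : finType) (c : I -> R) (M : I -> 'M[R]_m)
    (u : 'rV[R]_m) (v : 'cV[R]_m) :
  (u *m (\sum_i c i *: M i) *m v) 0 0 = \sum_i c i * (u *m M i *m v) 0 0.
Proof.
rewrite mulmx_sumr mulmx_suml summxE; apply: eq_bigr => i _.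
by rewrite -scalemxAr -scalemxAl mxE.
Qed.

Lemma trace_form_expand m p (S : 'M[R]_m) (U V : 'M[R]_(m, p)) t : S^T = S ->
  \tr ((U - t *: V)^T *m S *m (U - t *: V))
  = \tr (U^T *m S *m U) - 2 * t * \tr (U^T *m S *m V)
    + t ^+ 2 * \tr (V^T *m S *m V).
Proof.
move=> symS.
have VSU : \tr (V^T *m S *m U) = \tr (U^T *m S *m V).
  by rewrite -mxtrace_tr !trmx_mul trmxK symS mulmxA.
have trUV : (U - t *: V)^T = U^T - t *: V^T by apply/matrixP => a b; rewrite !mxE.
rewrite trUV !mulmxBr !mulmxBl -!scalemxAr -!scalemxAl.
by rewrite !raddfB /= !mxtraceZ VSU; ring.
Qed.

Lemma trace_form_rank1 m p (S : 'M[R]_m) (x : 'cV[R]_m) (r : 'rV[R]_p) :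
  \tr ((x *m r)^T *m S *m (x *m r)) = qform S x * (r *m r^T) 0 0.
Proof.
rewrite trmx_mul -!mulmxA mxtrace_mulC trace_mx11 -!mulmxA.
by rewrite !(mulmxA x^T) !(mulmxA (x^T *m S)) [LHS]mxE big_ord1.
Qed.

Lemma trace_form_rank1_mixed m p (S : 'M[R]_m) (x : 'cV[R]_m) (r : 'rV[R]_p)
    (V : 'M[R]_(m, p)) :
  \tr ((x *m r)^T *m S *m V) = (x^T *m S *m (V *m r^T)) 0 0.
Proof. by rewrite trmx_mul -!mulmxA mxtrace_mulC trace_mx11 -!mulmxA. Qed.

Lemma le_of_quadratic_ge0 (q T W : R) : 0 <= T ->
  (forall t, 0 <= q * T - 2 * t * q + t ^+ 2 * W) -> q <= W * T.
Proof.
move=> T_ge0 quad_ge0; have [T0|T_neq0] := eqVneq T 0; last first.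
  have T_gt0 : 0 < T by rewrite lt_def T_neq0.
  have := quad_ge0 T.
  have -> : q * T - 2 * T * q + T ^+ 2 * W = T * (T * W - q) by ring.
  by rewrite pmulr_rge0 // subr_ge0 mulrC.
rewrite T0 mulr0 leNgt; apply/negP => q_gt0.
pose t := q / (`|W| + 1).
have W1_gt0 : 0 < `|W| + 1 by rewrite ltr_pwDr.
have t_gt0 : 0 < t by rewrite divr_gt0.
have tW1 : t * (`|W| + 1) = q by rewrite /t divfK // gt_eqF.
have tW : t ^+ 2 * W <= t ^+ 2 * `|W| by rewrite ler_wpM2l ?sqr_ge0 ?ler_norm.
have := quad_ge0 t; rewrite T0 mulr0 sub0r.
nra.
Qed.

Lemma Nmx_sym m K (s : 'I_K -> nat) (B : forall l, 'M[R]_(m, s l)) w :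
  (Nmx B w)^T = Nmx B w.
Proof.
rewrite /Nmx linear_sum; apply: eq_bigr => l _.
by rewrite linearZ /= trmx_mul trmxK.
Qed.

Lemma Nmx_psd m K (s : 'I_K -> nat) (B : forall l, 'M[R]_(m, s l)) w :
  (forall l, 0 <= w l) -> psd (Nmx B w).
Proof.
move=> w_ge0 y; rewrite /qform /Nmx bilin_sum; apply: sumr_ge0 => l _.
rewrite mulr_ge0 //.
have -> : y^T *m (B l *m (B l)^T) *m y = ((B l)^T *m y)^T *m ((B l)^T *m y).
  by rewrite trmx_mul trmxK !mulmxA.
exact: gram_diag_ge0.
Qed.

(* The Cauchy--Schwarz inequality for the trace form
   <X, Y> = sum_l w_l tr(X_l' S Y_l), applied to X_l = B_l and Y_l = x y' B_l:
   for x = N(w) y,  x' S x <= (sum_l w_l tr(B_l' S B_l)) y' N(w) y. *)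
Lemma qform_Nmx_image_le m K (s : 'I_K -> nat) (B : forall l, 'M[R]_(m, s l))
    (w : 'I_K -> R) (S : 'M[R]_m) (y : 'cV[R]_m) :
  S^T = S -> psd S -> (forall l, 0 <= w l) ->
  qform S (Nmx B w *m y)
    <= (\sum_l w l * \tr ((B l)^T *m S *m B l)) * qform (Nmx B w) y.
Proof.
move=> symS psdS w_ge0; set x := Nmx B w *m y; set q := qform S x.
apply: le_of_quadratic_ge0 => [|t]; first exact: Nmx_psd.
pose X l := x *m (y^T *m B l) - t *: B l.
have X_expand l : \tr ((X l)^T *m S *m X l)
    = q * (y^T *m (B l *m (B l)^T) *m y) 0 0
      - 2 * t * (x^T *m S *m (B l *m (B l)^T) *m y) 0 0
      + t ^+ 2 * \tr ((B l)^T *m S *m B l).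
  rewrite trace_form_expand // trace_form_rank1 trace_form_rank1_mixed.
  by rewrite trmx_mul trmxK !mulmxA.
have T_eq : qform (Nmx B w) y = \sum_l w l * (y^T *m (B l *m (B l)^T) *m y) 0 0.
  by rewrite /qform /Nmx bilin_sum.
have q_eq : q = \sum_l w l * (x^T *m S *m (B l *m (B l)^T) *m y) 0 0.
  by rewrite /q /qform {2}/x mulmxA /Nmx bilin_sum.
have -> : q * qform (Nmx B w) y - 2 * t * q
          + t ^+ 2 * (\sum_l w l * \tr ((B l)^T *m S *m B l))
        = \sum_l w l * \tr ((X l)^T *m S *m X l).
  rewrite T_eq {2}q_eq !mulr_sumr -sumrN -!big_split /=.
  by apply: eq_bigr => l _; rewrite X_expand; ring.
by apply: sumr_ge0 => l _; rewrite mulr_ge0 // psd_trace_ge0.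
Qed.
End TraceInequality.

Section OffDiagonalBound.
Set Implicit Arguments.
Context {R : realType}.

Lemma in_colspace_image m p (v : 'cV[R]_m) (N : 'M[R]_(m, p)) :
  in_colspace v N -> exists y, v = N *m y.
Proof.
move=> /submxP [D vD]; exists D^T.
by rewrite -[v]trmxK vD trmx_mul trmxK.
Qed.

Lemma offdiag_bound m K (s : 'I_K -> nat) (B : forall l, 'M[R]_(m, s l))
    (w : 'I_K -> R) (S Q : 'M[R]_m) (c alpha : R) (j k : 'I_m) :
  S^T = S -> psd S -> (forall l, 0 <= w l) ->
  \sum_l w l * \tr ((B l)^T *m S *m B l) <= alpha ->
  in_colspace (unitv j) (Nmx B w) -> in_colspace (unitv k) (Nmx B w) ->
  Q^T = Q -> 0 <= c -> Nmx B w *m (c *: Q) *m Nmx B w = Nmx B w ->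
  `|S j k| <= alpha * c / 2 * lambda_max ((Ejk j k)^T *m Q *m Ejk j k).
Proof.
move=> symS psdS w_ge0 trace_le ej_in ek_in symQ c_ge0 NQN.
have alpha_ge0 : 0 <= alpha.
  by apply: le_trans trace_le; apply: sumr_ge0 => l _; rewrite mulr_ge0 ?psd_trace_ge0.
have qform_N y : qform (Nmx B w) y = c * qform Q (Nmx B w *m y).
  by rewrite -[in LHS]NQN qform_sandwich ?Nmx_sym // qformZ.
apply: offdiag_le_lambda_max => //; first exact: mulr_ge0.
move=> g; have [yj ej] := in_colspace_image ej_in.
have [yk ek] := in_colspace_image ek_in.
have -> : unitv j + g *: unitv k = Nmx B w *m (yj + g *: yk).
  by rewrite mulmxDr -scalemxAr -ej -ek.
apply: le_trans (qform_Nmx_image_le _ _ _ _ symS psdS w_ge0) _.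
rewrite -mulrA -qform_N.
by apply: ler_wpM2r => //; exact: Nmx_psd.
Qed.
End OffDiagonalBound.

Section Designs.
Set Implicit Arguments.
Context {R : realType}.

Lemma infomx_sym n m (f : 'I_n -> 'cV[R]_m) d : (infomx f d)^T = infomx f d.
Proof. exact: (Nmx_sym (fun=> 1%N) f (fun i => (d i)%:R)). Qed.

Lemma infomx_psd n m (f : 'I_n -> 'cV[R]_m) d : psd (infomx f d).
Proof. exact: (Nmx_psd (fun=> 1%N) f (fun i => (d i)%:R) (fun i => ler0n _ _)). Qed.

Lemma psd_invmx m (M : 'M[R]_m) :
  M^T = M -> M \in unitmx -> psd M -> psd (invmx M).
Proof.
move=> symM unitM psdM u; have := psdM (invmx M *m u).
by rewrite -qform_sandwich ?trmx_inv ?symM // mulVmx // mul1mx.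
Qed.

Lemma weighted_trace_le_PhiB m K (s : 'I_K -> nat) (B : forall l, 'M[R]_(m, s l))
    (M : 'M[R]_m) (w : 'I_K -> R) :
  is_weight w -> \sum_l w l * \tr ((B l)^T *m invmx M *m B l) <= PhiB B M.
Proof.
case=> w_ge0 w_sum1.
apply: (@le_trans _ _ (\sum_l w l * PhiB B M)).
  by apply: ler_sum => l _; apply: ler_wpM2l => //; exact: le_bigmax.
by rewrite -mulr_suml w_sum1 mul1r.
Qed.
End Designs.

Section ColumnSpaces.
Set Implicit Arguments.
Context {R : realType}.
Variables (m K : nat) (s : 'I_K -> nat) (B : forall l, 'M[R]_(m, s l)).

Lemma in_colspace_Nmx (v : 'cV[R]_m) (w : 'I_K -> R) :
  in_colspace v (Nmx B w) = (v^T <= Nmx B w)%MS.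
Proof. by rewrite /in_colspace Nmx_sym. Qed.

(* A block with positive weight lies in C(N(w)): if z' N(w) z = 0 for the
   cokernel z of N(w), then sum_l w_l |B_l' z|^2 = 0, so B_l' z = 0. *)
Lemma block_sub_Nmx (w : 'I_K -> R) l :
  (forall l, 0 <= w l) -> 0 < w l -> ((B l)^T <= Nmx B w)%MS.
Proof.
move=> w_ge0 wl_gt0; rewrite submxE; apply/eqP.
move: (cokermx _) (mulmx_coker (Nmx B w)) => Z NZ0.
have term l' : \tr (Z^T *m (w l' *: (B l' *m (B l')^T)) *m Z)
    = w l' * \tr (((B l')^T *m Z)^T *m ((B l')^T *m Z)).
  by rewrite -scalemxAr -scalemxAl mxtraceZ trmx_mul trmxK !mulmxA.
have : \tr (Z^T *m Nmx B w *m Z) = 0 by rewrite -mulmxA NZ0 mulmx0 mxtrace0.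
rewrite /Nmx mulmx_sumr mulmx_suml raddf_sum (eq_bigr _ (fun l' _ => term l')).
move=> /(psumr_eq0P (fun l' _ => mulr_ge0 (w_ge0 l') (gram_trace_ge0 _))).
move=> /(_ l isT) /eqP; rewrite mulf_eq0 (gt_eqF wl_gt0) /= => /eqP.
exact: gram_trace_eq0.
Qed.

Lemma in_colspace_Nmx_support (u w : 'I_K -> R) (v : 'cV[R]_m) :
  (forall l, 0 <= u l) -> (forall l, 0 <= w l) -> (forall l, 0 < u l -> 0 < w l) ->
  in_colspace v (Nmx B u) -> in_colspace v (Nmx B w).
Proof.
move=> u_ge0 w_ge0 supp; rewrite !in_colspace_Nmx => /submx_trans; apply.
apply: summx_sub => l _; have [->|ul_neq0] := eqVneq (u l) 0.
  by rewrite scale0r sub0mx.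
apply/scalemx_sub/(submx_trans (submxMl _ _))/block_sub_Nmx => //.
by apply: supp; rewrite lt_def ul_neq0 u_ge0.
Qed.

Lemma wavg_weight (w1 w2 : 'I_K -> R) :
  is_weight w1 -> is_weight w2 -> is_weight (wavg w1 w2).
Proof.
move=> [w1_ge0 w1_sum] [w2_ge0 w2_sum]; split => [l|].
  by rewrite /wavg divr_ge0 ?addr_ge0.
by rewrite /wavg -mulr_suml big_split /= w1_sum w2_sum; field.
Qed.

Lemma in_colspace_wavg_l (w1 w2 : 'I_K -> R) (v : 'cV[R]_m) :
  is_weight w1 -> is_weight w2 ->
  in_colspace v (Nmx B w1) -> in_colspace v (Nmx B (wavg w1 w2)).
Proof.
move=> [w1_ge0 _] [w2_ge0 _]; apply: in_colspace_Nmx_support => // l.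
  by rewrite /wavg divr_ge0 ?addr_ge0.
by move=> w1l_gt0; rewrite /wavg divr_gt0 // ltr_pwDl.
Qed.

Lemma in_colspace_wavg_r (w1 w2 : 'I_K -> R) (v : 'cV[R]_m) :
  is_weight w1 -> is_weight w2 ->
  in_colspace v (Nmx B w2) -> in_colspace v (Nmx B (wavg w1 w2)).
Proof.
move=> w1_weight w2_weight; rewrite (_ : wavg w1 w2 = wavg w2 w1).
  exact: in_colspace_wavg_l.
by apply/funext => l; rewrite /wavg addrC.
Qed.
End ColumnSpaces.

Section WeightChoices.
Set Implicit Arguments.
Context {R : realType}.
Variables (m K : nat) (s : 'I_K -> nat) (B : forall l, 'M[R]_(m, s l)).
Hypothesis rankB : \rank (Bcat B) = m.

Lemma enorm_eq0 p (v : 'cV[R]_p) : enorm v = 0 -> v = 0.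
Proof.
rewrite /enorm => /eqP; rewrite sqrtr_eq0 => sum_le0.
have sq_ge0 i : true -> 0 <= v i 0 ^+ 2 by rewrite sqr_ge0.
have /(psumr_eq0P sq_ge0) vi0 : \sum_i v i 0 ^+ 2 = 0.
  by apply/eqP; rewrite eq_le sum_le0 sumr_ge0.
apply/matrixP => i z; rewrite (ord1 z) mxE.
by have /eqP := vi0 i isT; rewrite sqrf_eq0 => /eqP.
Qed.

(* e_j = B B^+ e_j = sum_l B_l h_l^(j+), since B has full row rank. *)
Lemma unitv_hplus_decomp j : unitv j = \sum_l B l *m hplus B j l.
Proof.
transitivity (Bcat B *m (mp_pinv (Bcat B) *m unitv j)).
  by rewrite mulmxA mp_pinv_rinv // mul1mx.
by rewrite -[mp_pinv _ *m _]submxcolK /Bcat mul_mxrow_mxcol.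
Qed.

(* Not all blocks h_l^(j+) vanish, so the weights w^(j+) are well defined. *)
Lemma hplus_norm_sum_gt0 j : 0 < \sum_l enorm (hplus B j l).
Proof.
have norm_ge0 l : true -> 0 <= enorm (hplus B j l) by rewrite sqrtr_ge0.
rewrite lt_def sumr_ge0 // andbT; apply/eqP => /(psumr_eq0P norm_ge0) norms0.
have := unitv_hplus_decomp j; rewrite big1 => [|l _]; last first.
  by rewrite (enorm_eq0 _ (norms0 l isT)) mulmx0.
by move/matrixP/(_ j 0); rewrite !mxE !eqxx /=; apply/eqP; exact: oner_neq0.
Qed.

Lemma wplus_weight j : is_weight (wplus B j).
Proof.
split => [l|]; first by rewrite /wplus divr_ge0 ?sqrtr_ge0 ?ltW ?hplus_norm_sum_gt0.
by rewrite /wplus -mulr_suml mulfV // gt_eqF ?hplus_norm_sum_gt0.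
Qed.

(* Every nonzero h_l^(j+) gets a positive weight, so e_j in C(N(w^(j+))). *)
Lemma unitv_in_colspace_wplus j : in_colspace (unitv j) (Nmx B (wplus B j)).
Proof.
have [wplus_ge0 _] := wplus_weight j.
rewrite in_colspace_Nmx {1}unitv_hplus_decomp linear_sum /=.
apply: summx_sub => l _; rewrite trmx_mul.
have [->|h_neq0] := eqVneq (hplus B j l) 0; first by rewrite trmx0 mul0mx sub0mx.
apply: submx_trans (submxMl _ _) _; apply: block_sub_Nmx => //.
rewrite /wplus divr_gt0 ?hplus_norm_sum_gt0 // lt_def sqrtr_ge0 andbT.
by apply: contra_neq h_neq0; exact: enorm_eq0.
Qed.
End WeightChoices.

Section ThreeWeights.
Set Implicit Arguments.
Context {R : realType}.
Variables (m K : nat) (s : 'I_K -> nat) (B : forall l, 'M[R]_(m, s l)).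
Variables (S : 'M[R]_m) (alpha : R).
Hypotheses (symS : S^T = S) (psdS : psd S).
Hypothesis trace_le :
  forall w, is_weight w -> \sum_l w l * \tr ((B l)^T *m S *m B l) <= alpha.

Lemma uniform_weight : (0 < K)%N -> is_weight (fun _ : 'I_K => (K%:R : R)^-1).
Proof.
move=> K_gt0; split => [l|]; first by rewrite invr_ge0 ler0n.
by rewrite sumr_const card_ord -[_^-1 *+ _]mulr_natr mulVf // pnatr_eq0 -lt0n.
Qed.

(* Uniform weights: N(1/K) = (B B')/K is invertible with inverse K (B B')^-1. *)
Lemma uniform_offdiag_bound j k : (0 < K)%N -> \rank (Bcat B) = m ->
  `|S j k| <= alpha / 2 * K%:R *
    lambda_max ((Ejk j k)^T *m invmx (Bcat B *m (Bcat B)^T) *m Ejk j k).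
Proof.
move=> K_gt0 rankB; set G := Bcat B *m (Bcat B)^T.
have K_neq0 : (K%:R : R) != 0 by rewrite pnatr_eq0 -lt0n.
have unitG : G \in unitmx by apply: row_free_gram_unit; rewrite /row_free rankB.
have symG : G^T = G by rewrite /G trmx_mul trmxK.
have N_unif : Nmx B (fun=> K%:R^-1) = K%:R^-1 *: G.
  by rewrite /Nmx -scaler_sumr /G /Bcat tr_mxrow mul_mxrow_mxcol.
have in_N v : in_colspace v (Nmx B (fun=> K%:R^-1)).
  rewrite in_colspace_Nmx submx_full // row_full_unit N_unif unitmxZ //.
  by rewrite unitfE invr_eq0.
rewrite [alpha / 2 * _]mulrAC.
apply: (offdiag_bound _ symS psdS _ (trace_le (uniform_weight K_gt0)) (in_N _) (in_N _)).
- by move=> l; rewrite invr_ge0 ler0n.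
- by rewrite trmx_inv symG.
- exact: ler0n.
- rewrite N_unif -!scalemxAl -!scalemxAr !scalerA mulmxV //.
  by rewrite -scalemxAl mul1mx scalerA divfK.
Qed.

(* Weights w1, w2 with e_j in C(N(w1)) and e_k in C(N(w2)): both e_j and e_k
   lie in C(N(w)) for the average w, and N^+(w) is a generalized inverse. *)
Lemma avg_pinv_offdiag_bound (w1 w2 : 'I_K -> R) j k :
  is_weight w1 -> is_weight w2 ->
  in_colspace (unitv j) (Nmx B w1) -> in_colspace (unitv k) (Nmx B w2) ->
  `|S j k| <= alpha / 2 *
    lambda_max ((Ejk j k)^T *m mp_pinv (Nmx B (wavg w1 w2)) *m Ejk j k).
Proof.
move=> w1_weight w2_weight ej_in ek_in.
have w_weight := wavg_weight w1_weight w2_weight.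
have [NXN _ _ _] := mp_pinvP (Nmx B (wavg w1 w2)).
rewrite -[alpha]mulr1.
apply: (offdiag_bound _ symS psdS w_weight.1 (trace_le w_weight)).
- exact: in_colspace_wavg_l.
- exact: in_colspace_wavg_r.
- exact/mp_pinv_sym/Nmx_sym.
- exact: ler01.
- by rewrite scale1r.
Qed.
End ThreeWeights.

Theorem theorem2 (R : realType) (n m N K : nat)
  (f : 'I_n -> 'cV[R]_m) (s : 'I_K -> nat) (B : forall l : 'I_K, 'M[R]_(m, s l))
  (d0 dstar : 'I_n -> bool) (wstar : 'I_m -> 'I_K -> R) :
  (2 <= m)%N -> (m <= N)%N -> (N <= n)%N -> (0 < K)%N ->
  \rank (\matrix_(r < m, c < n) f c r 0) = m ->
  \rank (Bcat B) = m ->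
  (forall l (c : 'I_(s l)), col c (B l) != 0) ->
  is_design N d0 -> infomx f d0 \in unitmx ->
  (forall j, is_wstar B j (wstar j)) ->
  is_PhiB_optimal N f B dstar ->
  let alpha := PhiB B (infomx f d0) in
  let Sigma := invmx (infomx f dstar) in
  forall j k : 'I_m, j != k ->
    `|Sigma j k| <= alpha / 2 * K%:R *
        lambda_max ((Ejk j k)^T *m invmx (Bcat B *m (Bcat B)^T) *m Ejk j k)
 /\ `|Sigma j k| <= alpha / 2 *
        lambda_max ((Ejk j k)^T *m mp_pinv (Nmx B (wavg (wplus B j) (wplus B k)))
                      *m Ejk j k)
 /\ `|Sigma j k| <= alpha / 2 *
        lambda_max ((Ejk j k)^T *m mp_pinv (Nmx B (wavg (wstar j) (wstar k)))
                      *m Ejk j k).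
Proof.
move=> _ _ _ K_gt0 _ rankB _ d0_design d0_unit wstarP [_ unit_star optimal].
move=> alpha Sigma j k _.
have symS : Sigma^T = Sigma by rewrite trmx_inv infomx_sym.
have psdS : psd Sigma := psd_invmx (infomx_sym f dstar) unit_star (infomx_psd f dstar).
have trace_le w : is_weight w -> \sum_l w l * \tr ((B l)^T *m Sigma *m B l) <= alpha.
  move=> w_weight; apply: le_trans (optimal d0 d0_design d0_unit).
  exact: weighted_trace_le_PhiB.
have [wstar_j ej_in _] := wstarP j; have [wstar_k ek_in _] := wstarP k.
split; [|split].
- exact: uniform_offdiag_bound alpha symS psdS trace_le j k K_gt0 rankB.
- exact (avg_pinv_offdiag_bound alpha symS psdS trace_le
    (wplus_weight rankB j) (wplus_weight rankB k)
    (unitv_in_colspace_wplus rankB j) (unitv_in_colspace_wplus rankB k)).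
- exact (avg_pinv_offdiag_bound alpha symS psdS trace_le wstar_j wstar_k ej_in ek_in).
Qed.
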